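(* Let $p\in(0,1)$ and $p_{-}=\min\{p,1/2\}$. For the probabilistic triad dynamics with parameter $p$ on the triadic cycle $TC_{n}$, the time to social balance $\tau_{SB}(TC_n)$ is $O(n/p_{-})$.
   Context: Edges are labeled $\pm1$; a triangle is balanced if the product of its edge labels is $1$. Probabilistic triad dynamics with parameter $p$: while an imbalanced triangle exists, choose an imbalanced triangle $T$ uniformly at random; if $T$ has a single negative edge $e$, then with probability $p$ turn $e$ positive and with probability $1-p$ turn one of the other two edges of $T$ (chosen at random) negative; otherwise ($T$ has three negative edges) change the label of a uniformly random edge of $T$. The triadic cycle $TC_n$ is the graph consisting of $n$ triangles chained together, consecutive triangles sharing an edge, with the two free edges $AB$ and $CD$ of the extreme triangles of the chain glued by identifying $A\equiv C$, $B\equiv D$; thus each triangle shares one edge with each of its two neighbours and has one edge belonging to no other triangle. For such a graph, $\tau_{SB}(G)$ is the maximum over all initial labelings $s$ of the expected number of steps for the dynamics started at $s$ to reach a state with no imbalanced triangle. *)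

From HB Require Import structures.
From mathcomp Require Import all_boot all_order all_algebra.
Set Implicit Arguments. Unset Strict Implicit. Unset Printing Implicit Defensive.
Import Order.TTheory GRing.Theory Num.Theory.
Local Open Scope ring_scope.

(* The triadic cycle TC_n, described through its triangle/edge incidence:
   triangles are indexed by 'I_n (cyclically); edge [inl i] is the edge shared
   by triangle i and triangle i+1 (mod n); edge [inr i] is the edge belonging
   only to triangle i. *)
Definition tc_edge (n : nat) : finType := ('I_n + 'I_n)%type.

Definition tri_edges (n : nat) (t : 'I_n) : seq (tc_edge n) :=
  [:: inl (ord_pred t); inl t; inr t].

(* A labeling: [true] means the edge is labeled -1, [false] means +1. *)
Definition labeling (n : nat) := {ffun tc_edge n -> bool}.

Definition negs n (s : labeling n) (t : 'I_n) : nat :=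
  count (fun e => s e) (tri_edges t).

(* imbalanced iff product of labels is -1 iff odd number of negative edges *)
Definition imbalanced n (s : labeling n) (t : 'I_n) : bool := odd (negs s t).

Definition balanced_state n (s : labeling n) : bool :=
  [forall t, ~~ imbalanced s t].

Definition flip n (s : labeling n) (e : tc_edge n) : labeling n :=
  [ffun e' => if e' == e then ~~ s e' else s e'].

Section Dynamics.
Variable R : realFieldType.

Definition tri_trans (p : R) n (s : labeling n) (t : 'I_n) (s' : labeling n) : R :=
  if negs s t == 1%N then
    \sum_(e <- tri_edges t)
       (if s e then p else (1 - p) / 2) * (flip s e == s')%:R
  else (* three negative edges: flip a uniformly random edge *)
    \sum_(e <- tri_edges t) 3%:R^-1 * (flip s e == s')%:R.

Definition trans (p : R) n (s s' : labeling n) : R :=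
  if balanced_state s then (s == s')%:R
  else #|[pred t | imbalanced s t]|%:R^-1 *
       \sum_(t | imbalanced s t) tri_trans p s t s'.

Fixpoint dist (p : R) n (s0 : labeling n) (k : nat) : {ffun labeling n -> R} :=
  match k with
  | 0 => [ffun s => (s == s0)%:R]
  | k.+1 => [ffun s' => \sum_(s : labeling n) dist p s0 k s * trans p s s']
  end.

(* P_{s0}(T > k), T = first time a state with no imbalanced triangle is reached *)
Definition tail_prob (p : R) n (s0 : labeling n) (k : nat) : R :=
  \sum_(s : labeling n | ~~ balanced_state s) dist p s0 k s.

(* E_{s0}[T] = sum_{k>=0} P(T > k) <= B, i.e. every partial sum is <= B *)
Definition expected_time_le (p : R) n (s0 : labeling n) (B : R) : Prop :=
  forall K : nat, \sum_(k < K) tail_prob p s0 k <= B.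

Definition tauSB_le (p : R) (n : nat) (B : R) : Prop :=
  forall s0 : labeling n, expected_time_le p s0 B.
End Dynamics.

From HB Require Import structures.
From mathcomp Require Import all_boot all_order all_algebra.
From mathcomp Require Import zify lra.
Import Order.TTheory GRing.Theory Num.Theory.

(* The proof is a potential-function (drift) argument.  Give each triangle t a
   weight depending on the labels of its three edges: 5 (or 7 - 7p) when t is
   imbalanced, plus one unit for each negative edge that t owns, and let pot be
   the sum of the weights, so that 0 <= pot <= 9n.  One step of the dynamics
   from an unbalanced state decreases pot by at least 1 in expectation, whence
   sum_(k < K) P(T > k) <= pot(s0) <= 9n.  This bound does not depend on p;
   dividing by min(p, 1/2) <= 1 only weakens it. *)

Set Implicit Arguments. Unset Strict Implicit. Unset Printing Implicit Defensive.
Local Open Scope ring_scope.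

Lemma ordS_neq n (i : 'I_n) : (1 < n)%N -> ordS i != i.
Proof.
move=> n_gt1; apply/eqP => /(congr1 val) /=.
case: i => i lt_in /=; case: (ltnP i.+1 n) => [lt_Si_n | le_n_Si].
  by rewrite modn_small //; lia.
have -> : i.+1 = n by lia.
by rewrite modnn; lia.
Qed.

Lemma ord_pred_neq n (i : 'I_n) : (1 < n)%N -> ord_pred i != i.
Proof.
move=> n_gt1; apply/eqP => eq_i.
by have := ordS_neq (ord_pred i) n_gt1; rewrite ord_predK eq_i eqxx.
Qed.

Lemma sum_eq_indicator (R : pzSemiRingType) (T : finType) (x : T) (F : T -> R) :
  \sum_(y : T) (x == y)%:R * F y = F x.
Proof.
rewrite (bigD1 x) //= eqxx mul1r big1 ?addr0 // => y ne_yx.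
by rewrite eq_sym (negbTE ne_yx) mul0r.
Qed.

Section Kernel.
Variables (R : realFieldType) (p : R) (n : nat).
Hypothesis p01 : 0 < p < 1.

Definition edge_prob (s : labeling n) (t : 'I_n) (e : tc_edge n) : R :=
  if negs s t == 1%N then (if s e then p else (1 - p) / 2) else 3%:R^-1.

Lemma edge_prob_ge0 (s : labeling n) t e : 0 <= edge_prob s t e.
Proof.
case/andP: p01 => p_gt0 p_lt1.
by rewrite /edge_prob; case: ifP => _; [case: (s e); lra | rewrite invr_ge0 ler0n].
Qed.

Lemma tri_transE (s s' : labeling n) t :
  tri_trans p s t s' = \sum_(e <- tri_edges t) edge_prob s t e * (flip s e == s')%:R.
Proof.
by rewrite /tri_trans /edge_prob; case: ifP => one_neg; apply: eq_bigr.
Qed.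

Lemma tri_trans_expectation (s : labeling n) t (F : labeling n -> R) :
  \sum_(s' : labeling n) tri_trans p s t s' * F s' =
  \sum_(e <- tri_edges t) edge_prob s t e * F (flip s e).
Proof.
under eq_bigr do rewrite tri_transE big_distrl /=.
rewrite exchange_big /=; apply: eq_bigr => e _.
rewrite -[F (flip s e)]sum_eq_indicator big_distrr /=.
by apply: eq_bigr => s' _; rewrite mulrA.
Qed.

Lemma trans_expectation (s : labeling n) (F : labeling n -> R) : ~~ balanced_state s ->
  \sum_(s' : labeling n) trans p s s' * F s' =
  #|[pred t | imbalanced s t]|%:R^-1 *
  \sum_(t | imbalanced s t) \sum_(e <- tri_edges t) edge_prob s t e * F (flip s e).
Proof.
move=> /negbTE unbalanced; rewrite /trans unbalanced.
under eq_bigr do rewrite -mulrA big_distrl /=.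
rewrite -big_distrr /= exchange_big /=.
by under eq_bigr do rewrite tri_trans_expectation.
Qed.

Lemma trans_ge0 (s s' : labeling n) : 0 <= trans p s s'.
Proof.
rewrite /trans; case: ifP => _; first by rewrite ler0n.
rewrite mulr_ge0 ?invr_ge0 ?ler0n // sumr_ge0 // => t _.
by rewrite tri_transE sumr_ge0 // => e _; rewrite mulr_ge0 ?edge_prob_ge0 ?ler0n.
Qed.

Lemma dist_ge0 (s0 : labeling n) k s : 0 <= dist p s0 k s.
Proof.
elim: k s => [|k IHk] s /=; rewrite ffunE ?ler0n //.
by rewrite sumr_ge0 // => x _; rewrite mulr_ge0 ?trans_ge0.
Qed.

Lemma dist_expectationS (s0 : labeling n) k (F : labeling n -> R) :
  \sum_(s : labeling n) dist p s0 k.+1 s * F s =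
  \sum_(s : labeling n) dist p s0 k s * \sum_(s' : labeling n) trans p s s' * F s'.
Proof.
under eq_bigr do rewrite ffunE big_distrl /=.
rewrite exchange_big /=; apply: eq_bigr => s _; rewrite big_distrr /=.
by apply: eq_bigr => s' _; rewrite mulrA.
Qed.

End Kernel.

Section Drift.
Variables (R : realFieldType) (p : R) (n : nat) (V : labeling n -> R).

Lemma trans_drift :
  (forall s t, imbalanced s t ->
     \sum_(e <- tri_edges t) edge_prob p s t e * V (flip s e) <= V s - 1) ->
  forall s, \sum_(s' : labeling n) trans p s s' * V s' <= V s - (~~ balanced_state s)%:R.
Proof.
move=> local_drift s; have [balanced | unbalanced] := boolP (balanced_state s).
  by under eq_bigr do rewrite /trans balanced; rewrite sum_eq_indicator subr0.
rewrite trans_expectation //= -/(imbalanced s).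
set m := #|[pred t | imbalanced s t]|.
have m_gt0 : (0 < m)%N.
  move: unbalanced; rewrite negb_forall => /existsP [t].
  by rewrite negbK => imb_t; apply/card_gt0P; exists t.
apply: (@le_trans _ _ (m%:R^-1 * \sum_(t | imbalanced s t) (V s - 1))).
  apply: ler_wpM2l; first by rewrite invr_ge0 ler0n.
  exact: ler_sum (local_drift s).
rewrite sumr_const (_ : #|_| = m) // -(mulr_natr (V s - 1) m) mulrCA mulVf ?mulr1 //.
by rewrite pnatr_eq0 -lt0n.
Qed.

Hypothesis p01 : 0 < p < 1.
Hypothesis V_drift :
  forall s, \sum_(s' : labeling n) trans p s s' * V s' <= V s - (~~ balanced_state s)%:R.

(* Summing P(T > k) <= E[V(X_k)] - E[V(X_(k+1))] over k < K. *)
Lemma sum_tail_prob_le s0 K :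
  \sum_(k < K) tail_prob p s0 k + \sum_(s : labeling n) dist p s0 K s * V s <= V s0.
Proof.
elim: K => [|K IHK].
  rewrite big_ord0 add0r; under eq_bigr do rewrite ffunE eq_sym.
  by rewrite sum_eq_indicator.
apply: le_trans IHK; rewrite big_ord_recr /= -addrA lerD2l dist_expectationS.
apply: (@le_trans _ _ (tail_prob p s0 K +
   \sum_(s : labeling n) dist p s0 K s * (V s - (~~ balanced_state s)%:R))).
  rewrite lerD2l; apply: ler_sum => s _.
  by apply: ler_wpM2l; [exact: dist_ge0 | exact: V_drift].
rewrite /tail_prob (big_mkcond (fun s => ~~ balanced_state s)) -big_split /=.
apply: ler_sum => s _; case: (~~ balanced_state s) => /=.
  by rewrite mulrBr mulr1 addrC subrK.
by rewrite subr0 add0r.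
Qed.

Hypothesis V_ge0 : forall s, 0 <= V s.

Lemma expected_time_le_potential s0 : expected_time_le p s0 (V s0).
Proof.
move=> K; apply: le_trans (sum_tail_prob_le s0 K); rewrite lerDl.
by rewrite sumr_ge0 // => s _; rewrite mulr_ge0 ?(dist_ge0 p01).
Qed.

End Drift.

Section Potential.
Variables (R : realFieldType) (p : R).
Hypothesis p01 : 0 < p < 1.

(* [a], [b], [c] are the labels of the edges [inl (t-1)], [inl t] and [inr t]
   of triangle t; only the last two are owned by t, so each edge is counted once. *)
Definition tri_weight (a b c : bool) : R :=
  (if odd (a + b + c) then (if c && ~~ a && ~~ b then 7 - 7 * p else 5) else 0)
  + (b : nat)%:R + (c : nat)%:R.

Lemma tri_weight_ge0 a b c : 0 <= tri_weight a b c.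
Proof. by case/andP: p01 => *; case: a; case: b; case: c; rewrite /tri_weight /=; lra. Qed.

Lemma tri_weight_le9 a b c : tri_weight a b c <= 9.
Proof. by case/andP: p01 => *; case: a; case: b; case: c; rewrite /tri_weight /=; lra. Qed.

Variable n : nat.

Definition tri_pot (s : labeling n) (t : 'I_n) : R :=
  tri_weight (s (inl (ord_pred t))) (s (inl t)) (s (inr t)).

Definition pot (s : labeling n) : R := \sum_t tri_pot s t.

Lemma pot_ge0 (s : labeling n) : 0 <= pot s.
Proof. by rewrite sumr_ge0 // => t _; apply: tri_weight_ge0. Qed.

Lemma pot_le (s : labeling n) : pot s <= 9 * n%:R.
Proof.
have -> : 9 * n%:R = \sum_(t : 'I_n) (9 : R) by rewrite sumr_const card_ord mulr_natr.
by apply: ler_sum => t _; apply: tri_weight_le9.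
Qed.

Lemma flipE (s : labeling n) e e' : flip s e e' = (e' == e) (+) s e'.
Proof. by rewrite ffunE; case: eqP. Qed.

Lemma tri_pot_flip_notin (s : labeling n) e t :
  e \notin tri_edges t -> tri_pot (flip s e) t = tri_pot s t.
Proof.
move=> e_notin; have ne x : x \in tri_edges t -> (x == e) = false.
  by move=> x_in; apply: contraNF e_notin => /eqP <-.
by rewrite /tri_pot !flipE !ne // !inE eqxx ?orbT.
Qed.

Lemma pot_flip (s : labeling n) e :
  pot (flip s e) = pot s + \sum_(t | e \in tri_edges t) (tri_pot (flip s e) t - tri_pot s t).
Proof.
have -> : pot (flip s e) = pot s + \sum_t (tri_pot (flip s e) t - tri_pot s t).
  by rewrite /pot -big_split; apply: eq_bigr => t _; rewrite /= addrC subrK.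
congr (_ + _); rewrite (bigID (fun t => e \in tri_edges t)) /= [X in _ + X]big1 ?addr0 //.
by move=> t /tri_pot_flip_notin ->; rewrite subrr.
Qed.

Lemma pot_flip_inr (s : labeling n) t :
  pot (flip s (inr t)) = pot s + (tri_pot (flip s (inr t)) t - tri_pot s t).
Proof.
rewrite pot_flip (eq_bigl (pred1 t)) ?big_pred1_eq // => u.
by rewrite !inE -!sum_eqE /= eq_sym.
Qed.

Lemma pot_flip_inl (s : labeling n) i : (1 < n)%N ->
  pot (flip s (inl i)) = pot s + (tri_pot (flip s (inl i)) i - tri_pot s i)
                               + (tri_pot (flip s (inl i)) (ordS i) - tri_pot s (ordS i)).
Proof.
move=> n_gt1; rewrite pot_flip -addrA (bigD1 i) /=; last by rewrite !inE eqxx orbT.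
congr (_ + (_ + _)); rewrite (eq_bigl (pred1 (ordS i))) ?big_pred1_eq // => u.
rewrite !inE -!sum_eqE /= orbF.
have -> : (i == ord_pred u) = (u == ordS i).
  by apply/eqP/eqP => [->|->]; rewrite ?ord_predK ?ordSK.
by case: eqP => [->|_] /=; [rewrite ordS_neq | rewrite eq_sym; case: (u == i)].
Qed.

Lemma pot_local_drift : (1 < n)%N -> forall s t, imbalanced s t ->
  \sum_(e <- tri_edges t) edge_prob p s t e * pot (flip s e) <= pot s - 1.
Proof.
move=> n_gt1 s t imb_t; rewrite /tri_edges !big_cons big_nil addr0.
rewrite (pot_flip_inl _ (ord_pred t)) // ord_predK (pot_flip_inl _ t) // pot_flip_inr.
have /negbTE ne_pp_p := ord_pred_neq (ord_pred t) n_gt1.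
have /negbTE ne_p_t := ord_pred_neq t n_gt1.
have ne_t_p : (t == ord_pred t) = false by rewrite eq_sym.
have /negbTE ne_S_t := ordS_neq t n_gt1.
rewrite /tri_pot !flipE -!sum_eqE /= ordSK !eqxx ne_pp_p ne_p_t ne_t_p ne_S_t.
(* Only the seven edges of triangles t-1, t, t+1 matter: check all labelings. *)
move: imb_t; rewrite /imbalanced /edge_prob /negs /=.
move: (pot s) (s (inl (ord_pred (ord_pred t)))) (s (inl (ord_pred t))) (s (inr (ord_pred t)))
  (s (inl t)) (s (inr t)) (s (inl (ordS t))) (s (inr (ordS t))) => P a b c d e f g.
case/andP: p01 => p_gt0 p_lt1.
by case: a; case: b; case: c; case: d; case: e; case: f; case: g;
  rewrite /tri_weight /= => // _; nra.
Qed.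

End Potential.

Theorem theorem3 :
  exists (C n0 : nat), forall (R : realFieldType) (p : R), 0 < p < 1 ->
    forall n : nat, (n0 <= n)%N ->
      tauSB_le p n (C%:R * n%:R / Num.min p 2^-1).
Proof.
exists 9%N, 2%N => R p p01 n n_gt1 s0 K.
have drift := trans_drift (pot_local_drift p01 n_gt1).
have E_le_pot : \sum_(k < K) tail_prob p s0 k <= pot p s0.
  exact: expected_time_le_potential p01 drift (pot_ge0 p01 (n := n)) s0 K.
apply: le_trans E_le_pot (le_trans (pot_le p01 s0) _).
case/andP: p01 => p_gt0 p_lt1.
have min_gt0 : 0 < Num.min p 2^-1 by rewrite lt_min p_gt0 invr_gt0 ltr0n.
have min_le1 : Num.min p 2^-1 <= 1 by rewrite ge_min ltW.
by rewrite ler_pdivlMr // ler_piMr // mulr_ge0 ?ler0n.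
Qed.
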